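(* There exist a constant $c>0$ and, for infinitely many $T$, a sequence of multiclass outcomes $\mathbf x\in[K]^T$ and forecasts $\mathbf p\in\Delta_K^T$ (with $K=3$) such that $\mathrm{Reg}_\ell(\mathbf p,\mathbf x)\le0$ for every bounded separable scoring rule $\ell$, but $\mathrm{MaxAgentReg}(\mathbf p,\mathbf x)\ge cT$.
   Context: $\Delta_K$ is the probability simplex in $\mathbb R^K$, outcome $i$ identified with $e_i$. A multiclass scoring rule is $\ell:\Delta_K\times[K]\to\mathbb R$; with $\ell(p;q)=\sum_iq_i\ell(p,i)$ it is proper if $\ell(p;p)\le\ell(p';p)$ for all $p,p'\in\Delta_K$, and bounded if its values lie in $[-1,1]$; $\mathcal L$ is the set of bounded proper multiclass scoring rules. A multiclass scoring rule is separable if $\ell(p,x)=\sum_{i=1}^K\ell_i(p_i,\mathbf 1(x=i))$ for some proper binary scoring rules $\ell_i:[0,1]\times\{0,1\}\to\mathbb R$ (binary properness: $(1-q)\ell_i(q,0)+q\ell_i(q,1)\le(1-q)\ell_i(q',0)+q\ell_i(q',1)$ for all $q,q'\in[0,1]$). With $\beta=\frac1T\sum_te_{x_t}$, $\mathrm{Reg}_\ell(\mathbf p,\mathbf x)=\sum_t\ell(p_t,x_t)-\sum_t\ell(\beta,x_t)$ and $\mathrm{MaxAgentReg}(\mathbf p,\mathbf x)=\sup_{\ell\in\mathcal L}\mathrm{Reg}_\ell(\mathbf p,\mathbf x)$. *)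

From HB Require Import structures.
From mathcomp Require Import all_boot all_order all_algebra.
From mathcomp Require Import all_classical all_reals.
Set Implicit Arguments. Unset Strict Implicit. Unset Printing Implicit Defensive.
Import Order.TTheory GRing.Theory Num.Theory.
Local Open Scope ring_scope.
Local Open Scope classical_set_scope.

Section Defs.
Variable R : realType.

Definition in_simplex (K : nat) (p : 'I_K -> R) : Prop :=
  (forall i, 0 <= p i) /\ \sum_(i < K) p i = 1.

(* multiclass scoring rule l : Delta_K x [K] -> R (values off the simplex irrelevant) *)
Definition scoring_rule (K : nat) := ('I_K -> R) -> 'I_K -> R.

Definition exp_score (K : nat) (l : scoring_rule K) (p q : 'I_K -> R) : R :=
  \sum_(i < K) q i * l p i.

Definition proper (K : nat) (l : scoring_rule K) : Prop :=
  forall p p', in_simplex p -> in_simplex p' -> exp_score l p p <= exp_score l p' p.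

Definition bounded (K : nat) (l : scoring_rule K) : Prop :=
  forall p, in_simplex p -> forall i, -1 <= l p i <= 1.

Definition bounded_proper_rules (K : nat) : set (scoring_rule K) :=
  [set l | proper l /\ bounded l].

Definition binary_proper (lb : R -> bool -> R) : Prop :=
  forall q q', 0 <= q <= 1 -> 0 <= q' <= 1 ->
    (1 - q) * lb q false + q * lb q true <= (1 - q) * lb q' false + q * lb q' true.

Definition separable (K : nat) (l : scoring_rule K) : Prop :=
  exists lb : 'I_K -> R -> bool -> R,
    (forall i, binary_proper (lb i)) /\
    forall p, in_simplex p -> forall x : 'I_K,
      l p x = \sum_(i < K) lb i (p i) (x == i).

Definition empirical (K T : nat) (x : 'I_T -> 'I_K) : 'I_K -> R :=
  fun i => (#|[set t | x t == i]|)%:R / T%:R.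

Definition Reg (K T : nat) (l : scoring_rule K) (p : 'I_T -> 'I_K -> R)
    (x : 'I_T -> 'I_K) : R :=
  \sum_(t < T) l (p t) (x t) - \sum_(t < T) l (empirical x) (x t).

Definition MaxAgentReg (K T : nat) (p : 'I_T -> 'I_K -> R) (x : 'I_T -> 'I_K) : R :=
  sup [set Reg l p x | l in @bounded_proper_rules K].

End Defs.

(* One period has outcomes 0, 1, 2 and, at step k, the forecast uniform on
   {k, k+1}; its empirical distribution is uniform.  Every coordinate of these
   forecasts is calibrated (1/2 on one hit and one miss, 0 on a miss), so a
   separable rule, being a sum of binary proper rules, has no regret.  A general
   proper rule may instead choose from a menu of actions: each forecast picks the
   action losing 1/2 on its own outcome, while the uniform distribution picks the
   null action, a regret of 3/2 per period.  Repeating the period m times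
   multiplies every regret by m. *)

From Pilot Require Import Defs.
From HB Require Import structures.
From mathcomp Require Import all_boot all_order all_algebra.
From mathcomp Require Import all_classical all_reals.
From mathcomp Require Import lra.
Set Implicit Arguments. Unset Strict Implicit. Unset Printing Implicit Defensive.
Import Order.TTheory GRing.Theory Num.Theory.
Local Open Scope ring_scope.

Lemma card_set_pred (I : finType) (P : pred I) : #|[set i | P i]%classic| = #|P|.
Proof. by apply: eq_card => i; apply/idP/idP; rewrite ?in_setE. Qed.

Lemma empiricalE (R : realType) (K T : nat) (x : 'I_T -> 'I_K) i :
  empirical R x i = (\sum_(t < T) (x t == i)%:R) / T%:R.
Proof.
rewrite /empirical card_set_pred -sum1_card natr_sum big_mkcond /=.
by congr (_ / _); apply: eq_bigr => t _; rewrite unfold_in; case: eqP.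
Qed.

Section Regret.
Variables (R : realType) (K T : nat).
Implicit Types (l : scoring_rule R K) (p : 'I_T -> 'I_K -> R) (x : 'I_T -> 'I_K).

Lemma sum_card_preimset x : (\sum_(i < K) #|[set t | x t == i]%classic| = T)%N.
Proof.
rewrite -[RHS]card_ord -sum1_card (partition_big x xpredT) //=.
by apply: eq_bigr => i _; rewrite card_set_pred sum1_card.
Qed.

Lemma empirical_simplex x : (0 < T)%N -> in_simplex (empirical R x).
Proof.
move=> T_gt0; split=> [i|]; first by rewrite divr_ge0.
rewrite /empirical -mulr_suml -natr_sum sum_card_preimset divff //.
by rewrite pnatr_eq0 -lt0n.
Qed.

Lemma Reg_le_2T l p x : bounded l -> (forall t, in_simplex (p t)) ->
  Reg l p x <= T%:R *+ 2.
Proof.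
move=> l_bd p_simplex; have [T0|T_gt0] := posnP T.
  by rewrite /Reg; subst T; rewrite !big_ord0 subrr mulrn_wge0.
rewrite /Reg mulr2n; apply: lerD.
- rewrite -[T in T%:R]card_ord -sumr_const ler_sum // => t _.
  by case/andP: (l_bd _ (p_simplex t) (x t)).
- rewrite lerNl -[T in T%:R]card_ord -sumr_const -sumrN ler_sum // => t _.
  by case/andP: (l_bd _ (empirical_simplex x T_gt0) (x t)).
Qed.

Lemma Reg_le_MaxAgentReg l p x : bounded_proper_rules l ->
  (forall t, in_simplex (p t)) -> Reg l p x <= MaxAgentReg p x.
Proof.
move=> l_in p_simplex; apply: ub_le_sup; last by exists l.
exists (T%:R *+ 2) => _ [l' [_ l'_bd] <-].
exact: Reg_le_2T.
Qed.

End Regret.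

Definition periodize {A : Type} {n T : nat} (s : 'I_n.+1 -> A) : 'I_T -> A :=
  fun t => s (inord (t %% n.+1)).

Section Periodize.
Variables (n m : nat).
Local Notation T := (m * n.+1)%N.

Lemma sum_periodize {V : nmodType} (F : 'I_n.+1 -> V) :
  \sum_(t < T) periodize F t = (\sum_(k < n.+1) F k) *+ m.
Proof.
rewrite -(big_mkord xpredT (fun t => F (inord (t %% n.+1)))).
elim: m => [|k IHk]; first by rewrite mul0n big_geq.
rewrite mulSnr (@big_cat_nat _ _ _ (k * n.+1)) ?leq_addr // /= IHk mulrSr.
congr (_ + _); rewrite -{1}[(k * n.+1)%N]add0n big_addn addKn big_mkord.
by apply: eq_bigr => i _; rewrite addnC modnMDl modn_small // inord_val.
Qed.

Variables (R : realType) (K : nat).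

Lemma empirical_periodize (x : 'I_n.+1 -> 'I_K) : (0 < m)%N ->
  empirical R (periodize x : 'I_T -> 'I_K) = empirical R x.
Proof.
move=> m_gt0; apply: funext => i.
rewrite !empiricalE (sum_periodize (fun k => (x k == i)%:R)) natrM invfM mulrA.
by rewrite -[(\sum_(k < _) _) *+ m]mulr_natr mulfK // pnatr_eq0 -lt0n.
Qed.

Lemma Reg_periodize (l : scoring_rule R K) (p : 'I_n.+1 -> 'I_K -> R)
    (x : 'I_n.+1 -> 'I_K) : (0 < m)%N ->
  Reg l (periodize p : 'I_T -> _) (periodize x) = Reg l p x *+ m.
Proof.
move=> m_gt0; rewrite /Reg empirical_periodize // mulrnBl.
rewrite (sum_periodize (fun k => l (p k) (x k))).
by rewrite (sum_periodize (fun k => l (empirical R x) (x k))).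
Qed.

End Periodize.

Section MenuRule.
Variables (R : realType) (K n : nat) (v : 'I_n.+1 -> 'I_K -> R).

Definition menu_choice (p : 'I_K -> R) : 'I_n.+1 :=
  [arg min_(j < ord0) \sum_(i < K) p i * v j i]%O.

Definition menu_rule : scoring_rule R K := fun p => v (menu_choice p).

Lemma menu_rule_proper : Defs.proper menu_rule.
Proof.
move=> p p' _ _; rewrite /exp_score /menu_rule {1}/menu_choice.
by case: arg_minP => // j _; apply.
Qed.

Lemma menu_rule_bounded : (forall j i, -1 <= v j i <= 1) -> Defs.bounded menu_rule.
Proof. by move=> v_bd p _ i; apply: v_bd. Qed.

Lemma menu_choiceE p j :
  (forall k, k != j -> \sum_(i < K) p i * v j i < \sum_(i < K) p i * v k i) ->
  menu_choice p = j.
Proof.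
move=> j_best; rewrite /menu_choice; case: arg_minP => // k _ k_min.
by apply: contraTeq (k_min j isT) => /j_best /lt_geF ->.
Qed.

End MenuRule.

Definition vec3 {R : realType} (a b c : R) : 'I_3 -> R := fun i => nth 0 [:: a; b; c] i.

Definition uniform {R : realType} {K : nat} : 'I_K -> R := fun=> K%:R^-1.

Definition cyclic_forecast {R : realType} (k : 'I_3) : 'I_3 -> R :=
  nth (vec3 0 0 0) [:: vec3 (1/2) (1/2) 0; vec3 0 (1/2) (1/2); vec3 (1/2) 0 (1/2)] k.

Definition cyclic_menu {R : realType} (j : 'I_4) : 'I_3 -> R :=
  nth (vec3 0 0 0)
    [:: vec3 (1/2) (-1) 1; vec3 1 (1/2) (-1); vec3 (-1) 1 (1/2); vec3 0 0 0] j.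

Lemma empirical_id (R : realType) (K : nat) : empirical R (@id 'I_K) = uniform.
Proof.
by apply: funext => i; rewrite /empirical /uniform card_set_pred (card1 i) mul1r.
Qed.

Lemma uniform_simplex (R : realType) K : (0 < K)%N -> in_simplex (uniform : 'I_K -> R).
Proof. by rewrite -empirical_id; apply: empirical_simplex. Qed.

Lemma cyclic_forecast_simplex (R : realType) k :
  in_simplex (cyclic_forecast k : 'I_3 -> R).
Proof.
split.
  by case: k => [[|[|[|k]]] ?] // [[|[|[|i]]] ?] //; rewrite /cyclic_forecast /vec3 /=; lra.
rewrite !big_ord_recl big_ord0.
by case: k => [[|[|[|k]]] ?] //; rewrite /cyclic_forecast /vec3 /=; lra.
Qed.

Lemma cyclic_menu_bounded (R : realType) j i : -1 <= (cyclic_menu j i : R) <= 1.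
Proof.
case: j => [[|[|[|[|j]]]] ?] //; case: i => [[|[|[|i]]] ?] //.
all: by rewrite /cyclic_menu /vec3 /=; lra.
Qed.

Lemma menu_rule_cyclic_forecast (R : realType) k :
  menu_rule cyclic_menu (cyclic_forecast k : 'I_3 -> R) k = 1/2.
Proof.
rewrite /menu_rule (@menu_choiceE _ _ _ _ _ (widen_ord (leqnSn 3) k)).
  by case: k => [[|[|[|k]]] ?] //=; rewrite /cyclic_menu /vec3 /=.
case: k => [[|[|[|k]]] ?] // [[|[|[|[|j]]]] ?] //= _.
all: by rewrite !big_ord_recl big_ord0 /cyclic_forecast /cyclic_menu /vec3 /=; lra.
Qed.

Lemma menu_rule_uniform (R : realType) k :
  menu_rule cyclic_menu (uniform : 'I_3 -> R) k = 0.
Proof.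
rewrite /menu_rule (@menu_choiceE _ _ _ _ _ ord_max).
  by case: k => [[|[|[|k]]] ?] //=; rewrite /cyclic_menu /vec3 /=.
case=> [[|[|[|[|j]]]] ?] //= _.
all: by rewrite !big_ord_recl big_ord0 /uniform /cyclic_menu /vec3 /=; lra.
Qed.

Lemma Reg_cyclic_menu (R : realType) :
  Reg (menu_rule cyclic_menu) cyclic_forecast id = 3/2 :> R.
Proof.
rewrite /Reg empirical_id !big_ord_recl !big_ord0.
by rewrite !menu_rule_cyclic_forecast !menu_rule_uniform; lra.
Qed.

Lemma binary_proper_calibrated (R : realType) (lb : R -> bool -> R) (q q' a b : R) :
  binary_proper lb -> 0 <= q <= 1 -> 0 <= q' <= 1 -> 0 <= a + b -> q * (a + b) = a ->
  a * lb q true + b * lb q false <= a * lb q' true + b * lb q' false.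
Proof.
move=> lb_proper q01 q'01; set s := a + b => s_ge0 qs.
have -> : b = s * (1 - q) by rewrite mulrBr mulr1 mulrC qs /s addrC addKr.
by rewrite -qs; have := ler_wpM2l s_ge0 (lb_proper _ _ q01 q'01); lra.
Qed.

Lemma Reg_cyclic_separable (R : realType) (l : scoring_rule R 3) :
  separable l -> Reg l cyclic_forecast id <= 0.
Proof.
case=> lb [lb_proper l_sep].
have calibrated i : lb i (1/2) true + lb i (1/2) false + lb i 0 false <=
    lb i 3^-1 true + lb i 3^-1 false *+ 2.
  have half : 1 * lb i (1/2) true + 1 * lb i (1/2) false <=
      1 * lb i 3^-1 true + 1 * lb i 3^-1 false.
    by apply: binary_proper_calibrated => //; lra.
  have zero : 0 * lb i 0 true + 1 * lb i 0 false <=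
      0 * lb i 3^-1 true + 1 * lb i 3^-1 false.
    by apply: binary_proper_calibrated => //; lra.
  lra.
rewrite /Reg empirical_id !big_ord_recl !big_ord0.
rewrite !(l_sep _ (cyclic_forecast_simplex R _)) !(l_sep _ (@uniform_simplex R 3 isT)).
rewrite !big_ord_recl !big_ord0 /cyclic_forecast /uniform /vec3 /= !eqxx.
(* the remaining tests compare distinct ordinals and compute to [false] *)
do ! rewrite [_ == _](_ : _ = false) //.
have := calibrated ord0; have := calibrated (lift ord0 ord0).
by have := calibrated (lift ord0 (lift ord0 ord0)); lra.
Qed.

Theorem corollary5p6 (R : realType) :
  exists c : R, 0 < c /\
  forall N : nat, exists T : nat, (N <= T)%N /\
  exists (x : 'I_T -> 'I_3) (p : 'I_T -> 'I_3 -> R),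
    (forall t, in_simplex (p t)) /\
    (forall l : scoring_rule R 3, separable l -> bounded l -> Reg l p x <= 0) /\
    c * T%:R <= MaxAgentReg p x.
Proof.
exists (1/2); split=> [|N]; first lra.
exists (N.+1 * 3)%N; split.
  exact: leq_trans (leqnSn N) (leq_pmulr N.+1 (isT : (0 < 3)%N)).
have p_simplex (t : 'I_(N.+1 * 3)) :
    in_simplex (periodize cyclic_forecast t : 'I_3 -> R).
  exact: cyclic_forecast_simplex.
exists (periodize id), (periodize cyclic_forecast); split; first exact: p_simplex.
split=> [l l_sep _|].
  by rewrite Reg_periodize // mulrn_wle0 // Reg_cyclic_separable.
have menu_in : bounded_proper_rules (menu_rule (cyclic_menu : 'I_4 -> 'I_3 -> R)).
  by split; [exact: menu_rule_proper | exact/menu_rule_bounded/cyclic_menu_bounded].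
apply: le_trans (Reg_le_MaxAgentReg (periodize id) menu_in p_simplex).
by rewrite Reg_periodize // Reg_cyclic_menu natrM -mulr_natr; lra.
Qed.
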